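(* For all $r\ge0$, $2\le n\le\infty$ and $0\le k\le r$, every morphism of $n$-multicomplexes having the left lifting property with respect to all morphisms that have the right lifting property with respect to $J^n_k$ is an $E_r$-quasi-isomorphism; i.e. $J^n_k\text{-cof}\subseteq\mathcal E^n_r$.
   Context: Throughout, $R$ is a commutative unital ring. For $1\le n\le\infty$, an $n$-multicomplex is a $\mathbb Z\times\mathbb Z$-bigraded $R$-module $A=\{A^{p,q}\}$ with $R$-linear maps $d_i\colon A\to A$ ($i\ge0$) of bidegree $(-i,1-i)$ such that $\sum_{i+j=l}(-1)^id_id_j=0$ for all $l\ge0$, and $d_i=0$ for all $i\ge n$. Morphisms are bidegree $(0,0)$ maps commuting with all $d_i$; category $\mathrm{Ch}_n$. Spectral sequence: $Z_0^{p,q}(A)=A^{p,q}$; for $r\ge1$, $Z_r^{p,q}(A)$ is the set of $a_0\in A^{p,q}$ for which there exist $a_j\in A^{p-j,q-j}$ ($1\le j\le r-1$) with $\sum_{i+j=l}(-1)^id_ia_j=0$ for $0\le l\le r-1$. $B_0=0$, $B_1^{p,q}(A)=A^{p,q}\cap\operatorname{im}d_0$, and for $r\ge2$, $B_r^{p,q}(A)$ is the set of $x\in A^{p,q}$ for which there exist $b_i\in A^{p+r-1-i,q+r-2-i}$ ($0\le i\le r-1$) with $x=\sum_{i=0}^{r-1}(-1)^id_ib_{r-1-i}$ and $\sum_{i=0}^l(-1)^id_ib_{l-i}=0$ for $0\le l\le r-2$. $E_r^{p,q}(A)=Z_r^{p,q}(A)/B_r^{p,q}(A)$, the spectral sequence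 of the column-filtered total complex. A morphism $f$ is an $E_r$-quasi-isomorphism if $E_{r+1}(f)$ is an isomorphism; $\mathcal E^n_r$ denotes the class of these. Representing objects: $\mathbb D^n(p,q)$ is the free $n$-multicomplex on one generator in bidegree $(p,q)$. $\mathcal ZW^n_0(p,q)=\mathbb D^n(p,q)$; for $k\ge1$, $\mathcal ZW^n_k(p,q)$ is the $n$-multicomplex generated by elements $a_0,\dots,a_{k-1}$, $a_i$ in bidegree $(p-i,q-i)$, subject to the relations $\sum_{i+j=l}(-1)^id_ia_j=0$ for $0\le l\le k-1$ (equivalently the iterated pushout construction of the paper); morphisms $\mathcal ZW^n_k(p,q)\to A$ correspond to tuples $(a_0,\dots,a_{k-1})$ in $A$ satisfying these relations. $J^n_k=\{0\to\mathcal ZW^n_k(p,q)\}_{p,q\in\mathbb Z}$. For a set $S$ of maps, $S$-inj is the class of maps with the right lifting property w.r.t. $S$, and $S$-cof is the class of maps with the left lifting property w.r.t. $S$-inj. *)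

From HB Require Import structures.
From mathcomp Require Import all_boot all_order all_algebra.
Set Implicit Arguments. Unset Strict Implicit. Unset Printing Implicit Defensive.
Import GRing.Theory Num.Theory.
Local Open Scope ring_scope.

(* n in {1,2,...} ∪ {∞}: [Some m] is m, [None] is ∞.  [ltx i n] is  i < n. *)
Definition ltx (i : nat) (n : option nat) : bool :=
  if n is Some m then (i < m)%N else true.

(* index shift with [sh p 0] convertible to [p]: sh p j = p - j *)
Definition sh (p : int) (j : nat) : int :=
  if j is 0%N then p else p - j%:Z.

(* The map d_i of bidegree (-i,1-i) is encoded as the family of linear maps
   [mx_d i p q p' q' : A^{p,q} -> A^{p',q'}] which is required to vanish unless
   (p',q') = (p-i, q+1-i); this avoids casts between equal indices. *)
Record mcx (R : comPzRingType) (n : option nat) := Mcx {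
  mA :> int -> int -> lmodType R;
  md : nat -> forall p q p' q' : int, {linear mA p q -> mA p' q'};
  md_deg : forall i p q p' q' (x : mA p q),
      (p' != p - i%:Z) || (q' != q + 1 - i%:Z) -> md i p q p' q' x = 0;
  md_vanish : forall i p q p' q' (x : mA p q), ~~ ltx i n -> md i p q p' q' x = 0;
  md_rel : forall (l : nat) p q (x : mA p q),
      \sum_(i < l.+1)
        (-1) ^+ i *: md i (p - (l - i)%:Z) (q + 1 - (l - i)%:Z) (p - l%:Z) (q + 2 - l%:Z)
                       (md (l - i) p q (p - (l - i)%:Z) (q + 1 - (l - i)%:Z) x) = 0
}.

Record mhom (R : comPzRingType) (n : option nat) (A B : mcx R n) := Mhom {
  mf :> forall p q, {linear A p q -> B p q};
  mf_comm : forall i p q p' q' (x : A p q),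
      mf p' q' (md A i p q p' q' x) = md B i p q p' q' (mf p q x)
}.

Section Defs.
Variables (R : comPzRingType) (n : option nat).

Definition zw_rel (A : mcx R n) (k : nat) (p q : int)
    (a : forall j : nat, A (sh p j) (sh q j)) : Prop :=
  forall l : nat, (l < k)%N ->
    \sum_(i < l.+1)
      (-1) ^+ i *: md A i (sh p (l - i)) (sh q (l - i)) (sh p l) (sh q l + 1) (a (l - i)%N)
    = 0.

Definition Zr (A : mcx R n) (r : nat) (p q : int) (x : A p q) : Prop :=
  exists a : forall j : nat, A (sh p j) (sh q j), a 0%N = x /\ zw_rel r a.

Definition Br (A : mcx R n) (r : nat) (p q : int) (x : A p q) : Prop :=
  match r with
  | 0%N => x = 0
  | 1%N => exists y : A p (q - 1), x = md A 0 p (q - 1) p q y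
  | r'.+2 =>
      let P := p + r%:Z - 1 in let Q := q + r%:Z - 2 in
      exists b : forall m : nat, A (sh P m) (sh Q m),
        x = \sum_(i < r) (-1) ^+ i *: md A i (sh P (r - 1 - i)) (sh Q (r - 1 - i)) p q
                                        (b (r - 1 - i)%N)
        /\ forall l : nat, (l <= r - 2)%N ->
             \sum_(i < l.+1) (-1) ^+ i *:
                md A i (sh P (l - i)) (sh Q (l - i)) (sh P l) (sh Q l + 1) (b (l - i)%N) = 0
  end.

(* f is an E_r-quasi-isomorphism: E_{r+1}(f) : Z_{r+1}/B_{r+1} -> Z_{r+1}/B_{r+1}
   is bijective in every bidegree (written out on representatives). *)
Definition Er_qiso (r : nat) (X Y : mcx R n) (f : mhom X Y) : Prop :=
  forall p q : int,
    (forall x : X p q, Zr (r.+1) x -> Br (r.+1) (f p q x) -> Br (r.+1) x) /\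
    (forall y : Y p q, Zr (r.+1) y ->
       exists x : X p q, Zr (r.+1) x /\ Br (r.+1) (f p q x - y)).

(* Morphisms ZW^n_k(p,q) -> A correspond to tuples (a_0,...,a_{k-1}) satisfying
   the relations (for k = 0: ZW_0 = D^n(p,q), a single free element a_0).
   f has the RLP w.r.t. J^n_k = {0 -> ZW^n_k(p,q)} iff every such tuple in B
   lifts along f to such a tuple in A. *)
Definition J_inj (k : nat) (A B : mcx R n) (f : mhom A B) : Prop :=
  forall (p q : int) (b : forall j : nat, B (sh p j) (sh q j)),
    zw_rel k b ->
    exists a : forall j : nat, A (sh p j) (sh q j),
      zw_rel k a /\ forall j : nat, (j < maxn k 1)%N -> f _ _ (a j) = b j.

Definition J_cof (k : nat) (X Y : mcx R n) (g : mhom X Y) : Prop :=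
  forall (A B : mcx R n) (f : mhom A B), J_inj k f ->
  forall (u : mhom X A) (v : mhom Y B),
    (forall p q (x : X p q), f p q (u p q x) = v p q (g p q x)) ->
    exists h : mhom Y A,
      (forall p q (x : X p q), h p q (g p q x) = u p q x) /\
      (forall p q (y : Y p q), f p q (h p q y) = v p q y).

End Defs.

From HB Require Import structures.
From mathcomp Require Import all_boot all_order all_algebra.
From mathcomp Require Import boolp zify.
Set Implicit Arguments. Unset Strict Implicit. Unset Printing Implicit Defensive.
Import GRing.Theory.
Local Open Scope ring_scope.

(* Retract argument.  For a multicomplex [Y] we build a "cone" [C] with a map
   [eps : C -> Y] such that every [J_k]-tuple of [Y] lifts along [eps] for [k <= r], and
   [eps] sends [Z_(r+1)(C)] into [B_(r+1)(Y)].  Then [[g, eps] : X + C -> Y] has the right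
   lifting property against [J_k], so lifting in the square [(inl, id)] gives [h] with
   [h g = inl] and [[g, eps] h = id]: [g] is a retract of [inl].  Hence [E_(r+1)(g)] is
   injective ([x = pr1 h g x]) and surjective ([y - g (pr1 h y) = eps (pr2 h y)] is an
   [(r+1)]-boundary). *)

Lemma pair_sumE (V1 V2 : nmodType) (I : Type) (s : seq I) (P : pred I) (F : I -> V1 * V2) :
  \sum_(i <- s | P i) F i = (\sum_(i <- s | P i) (F i).1, \sum_(i <- s | P i) (F i).2).
Proof. by apply: injective_projections; rewrite /= raddf_sum. Qed.

Section PairMaps.
Variable R : pzRingType.

Section PairMap.
Variables (U1 U2 V1 V2 : lmodType R) (f : {linear U1 -> V1}) (g : {linear U2 -> V2}).
Definition pair_map (x : U1 * U2) : V1 * V2 := (f x.1, g x.2).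
Lemma pair_map_is_linear : linear pair_map.
Proof. by move=> a x y; rewrite /pair_map /= !linearP. Qed.
HB.instance Definition _ :=
  GRing.isLinear.Build R (U1 * U2)%type (V1 * V2)%type *:%R pair_map pair_map_is_linear.
End PairMap.

Section PairInl.
Variables (U V : lmodType R).
Definition pair_inl (x : U) : U * V := (x, 0).
Lemma pair_inl_is_linear : linear pair_inl.
Proof. by move=> a x y; apply: injective_projections => //=; rewrite scaler0 addr0. Qed.
HB.instance Definition _ := GRing.isLinear.Build R U (U * V)%type *:%R pair_inl pair_inl_is_linear.
End PairInl.

Section Copair.
Variables (U1 U2 V : lmodType R) (f : {linear U1 -> V}) (g : {linear U2 -> V}).
Definition copair (x : U1 * U2) : V := f x.1 + g x.2.
Lemma copair_is_linear : linear copair.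
Proof. by move=> a x y; rewrite /copair /= !linearP scalerDr addrACA. Qed.
HB.instance Definition _ := GRing.isLinear.Build R (U1 * U2)%type V *:%R copair copair_is_linear.
End Copair.
End PairMaps.

Section DProd.
Variables (R : pzRingType) (I : Type) (V : I -> lmodType R).
Definition dprod := forall i, V i.
HB.instance Definition _ := gen_eqMixin dprod.
HB.instance Definition _ := gen_choiceMixin dprod.
Definition dprod_add (f g : dprod) : dprod := fun i => f i + g i.
Definition dprod_opp (f : dprod) : dprod := fun i => - f i.
Definition dprod_scale (a : R) (f : dprod) : dprod := fun i => a *: f i.
Lemma dprod_addA : associative dprod_add.
Proof. by move=> f g h; apply: functional_extensionality_dep => i; rewrite /dprod_add addrA. Qed.
Lemma dprod_addC : commutative dprod_add.
Proof. by move=> f g; apply: functional_extensionality_dep => i; rewrite /dprod_add addrC. Qed.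
Lemma dprod_add0 : left_id (fun=> 0) dprod_add.
Proof. by move=> f; apply: functional_extensionality_dep => i; rewrite /dprod_add add0r. Qed.
Lemma dprod_addN : left_inverse (fun=> 0) dprod_opp dprod_add.
Proof. by move=> f; apply: functional_extensionality_dep => i; rewrite /dprod_add addNr. Qed.
HB.instance Definition _ :=
  GRing.isZmodule.Build dprod dprod_addA dprod_addC dprod_add0 dprod_addN.
Lemma dprod_scaleA a b f : dprod_scale a (dprod_scale b f) = dprod_scale (a * b) f.
Proof. by apply: functional_extensionality_dep => i; rewrite /dprod_scale scalerA. Qed.
Lemma dprod_scale1 : left_id 1 dprod_scale.
Proof. by move=> f; apply: functional_extensionality_dep => i; rewrite /dprod_scale scale1r. Qed.
Lemma dprod_scaleDr : right_distributive dprod_scale +%R.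
Proof. by move=> a f g; apply: functional_extensionality_dep => i; rewrite /dprod_scale scalerDr. Qed.
Lemma dprod_scaleDl f : {morph dprod_scale^~ f : a b / a + b}.
Proof. by move=> a b; apply: functional_extensionality_dep => i; rewrite /dprod_scale scalerDl. Qed.
HB.instance Definition _ := GRing.Zmodule_isLmodule.Build R dprod
  dprod_scaleA dprod_scale1 dprod_scaleDr dprod_scaleDl.

Lemma dprod_addE (f g : dprod) i : (f + g) i = f i + g i. Proof. by []. Qed.
Lemma dprod_scaleE a (f : dprod) i : (a *: f) i = a *: f i. Proof. by []. Qed.
Lemma dprod_sumE (J : Type) (s : seq J) (P : pred J) (F : J -> dprod) i :
  (\sum_(j <- s | P j) F j) i = \sum_(j <- s | P j) F j i.
Proof.
elim: s => [|x s IH]; first by rewrite !big_nil.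
by rewrite !big_cons; case: (P x) => //; rewrite dprod_addE IH.
Qed.
End DProd.

Section DirectSum.
Variables (R : comPzRingType) (n : option nat) (A B : mcx R n).

Definition msum_md i p q p' q' : {linear (A p q * B p q)%type -> (A p' q' * B p' q')%type} :=
  pair_map (md A i p q p' q') (md B i p q p' q').
Lemma msum_md_deg i p q p' q' (x : (A p q * B p q)%type) :
  (p' != p - i%:Z) || (q' != q + 1 - i%:Z) -> msum_md i p q p' q' x = 0.
Proof. by move=> h; rewrite /= /pair_map !md_deg. Qed.
Lemma msum_md_vanish i p q p' q' (x : (A p q * B p q)%type) :
  ~~ ltx i n -> msum_md i p q p' q' x = 0.
Proof. by move=> h; rewrite /= /pair_map !md_vanish. Qed.
Lemma msum_md_rel (l : nat) p q (x : (A p q * B p q)%type) :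
  \sum_(i < l.+1)
    (-1) ^+ i *: msum_md i (p - (l - i)%:Z) (q + 1 - (l - i)%:Z) (p - l%:Z) (q + 2 - l%:Z)
                   (msum_md (l - i) p q (p - (l - i)%:Z) (q + 1 - (l - i)%:Z) x) = 0.
Proof. by rewrite pair_sumE /= (@md_rel _ _ A) (@md_rel _ _ B). Qed.
Definition msum : mcx R n :=
  @Mcx R n (fun p q => (A p q * B p q)%type) msum_md msum_md_deg msum_md_vanish msum_md_rel.

Definition msum_fst : mhom msum A := @Mhom R n msum A (fun p q => fst) (fun _ _ _ _ _ _ => erefl).
Definition msum_snd : mhom msum B := @Mhom R n msum B (fun p q => snd) (fun _ _ _ _ _ _ => erefl).
Lemma msum_inl_comm i p q p' q' (x : A p q) :
  pair_inl (B p' q') (md A i p q p' q' x) = msum_md i p q p' q' (pair_inl (B p q) x).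
Proof. by rewrite /= /pair_map /pair_inl /= linear0. Qed.
Definition msum_inl : mhom A msum := @Mhom R n A msum (fun p q => pair_inl (B p q)) msum_inl_comm.

Variables (C : mcx R n) (f : mhom A C) (g : mhom B C).
Lemma msum_copair_comm i p q p' q' (x : msum p q) :
  copair (f p' q') (g p' q') (md msum i p q p' q' x) = md C i p q p' q' (copair (f p q) (g p q) x).
Proof. by rewrite /= /pair_map /copair /= linearD !mf_comm. Qed.
Definition msum_copair : mhom msum C :=
  @Mhom R n msum C (fun p q => copair (f p q) (g p q)) msum_copair_comm.
End DirectSum.

Definition mid (R : comPzRingType) (n : option nat) (A : mcx R n) : mhom A A :=
  @Mhom R n A A (fun p q => idfun) (fun _ _ _ _ _ _ => erefl).

Section CyclesBoundaries.
Variables (R : comPzRingType) (n : option nat).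

Lemma mhom_Zr (A B : mcx R n) (f : mhom A B) r p q (x : A p q) : Zr r x -> Zr r (f p q x).
Proof.
case=> a [a0 ha]; exists (fun j => f _ _ (a j)); split; first by rewrite a0.
move=> l hl; have := congr1 (f (sh p l) (sh q l + 1)) (ha l hl).
rewrite linear0 linear_sum => e; rewrite -[RHS]e.
by apply: eq_bigr => i _; rewrite linearZ mf_comm.
Qed.

Lemma mhom_Br (A B : mcx R n) (f : mhom A B) r p q (x : A p q) : Br r x -> Br r (f p q x).
Proof.
case: r => [|[|r']] /=.
- by move=> ->; rewrite linear0.
- by case=> y ->; exists (f _ _ y); rewrite mf_comm.
- case=> b [-> hb]; exists (fun m => f _ _ (b m)); split.
    by rewrite linear_sum; apply: eq_bigr => i _; rewrite linearZ mf_comm.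
  move=> l hl; have := congr1 (f _ _) (hb l hl).
  rewrite linear0 linear_sum => e; rewrite -[RHS]e.
  by apply: eq_bigr => i _; rewrite linearZ mf_comm.
Qed.

Lemma BrN (A : mcx R n) r p q (x : A p q) : Br r x -> Br r (- x).
Proof.
case: r => [|[|r']] /=.
- by move=> ->; rewrite oppr0.
- by case=> y ->; exists (- y); rewrite linearN.
- case=> b [-> hb]; exists (fun m => - b m); split.
    by rewrite -sumrN; apply: eq_bigr => i _; rewrite linearN scalerN.
  move=> l hl; have := congr1 -%R (hb l hl).
  rewrite oppr0 -sumrN => e; rewrite -[RHS]e; apply: eq_bigr => i _; by rewrite linearN scalerN.
Qed.

Lemma Er_qiso_of_retract r (X Y C : mcx R n) (g : mhom X Y) (e : mhom C Y)
    (h : mhom Y (msum X C)) :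
  (forall p q (z : C p q), Zr r.+1 z -> Br r.+1 (e p q z)) ->
  (forall p q (x : X p q), h p q (g p q x) = (x, 0)) ->
  (forall p q (y : Y p q), g p q (h p q y).1 + e p q (h p q y).2 = y) ->
  Er_qiso r g.
Proof.
move=> eZB hg he p q; split=> [x _ gxB | y yZ].
  by have := mhom_Br (msum_fst X C) (mhom_Br h gxB); rewrite /= hg.
have hyZ := mhom_Zr h yZ.
exists (h p q y).1; split; first exact: (mhom_Zr (msum_fst X C) hyZ).
have -> : g p q (h p q y).1 - y = - e p q (h p q y).2.
  by rewrite -{2}(he p q y) opprD addrA subrr add0r.
exact/BrN/eZB/(mhom_Zr (msum_snd X C) hyZ).
Qed.
End CyclesBoundaries.

Section TotalModule.
Variables (R : comPzRingType) (n : option nat) (Y : mcx R n).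

(* Forgetting the bigrading, the [d_i] of [Y] become endomorphisms [dtot i] of [tot]. *)
Definition tot := dprod (fun p : int => dprod (fun q : int => Y p q)).

Lemma tot_ext (F G : tot) : (forall p q, F p q = G p q) -> F = G.
Proof.
move=> eFG; apply: functional_extensionality_dep => p.
exact: functional_extensionality_dep.
Qed.

Lemma tot_sumE (J : Type) (s : seq J) (P : pred J) (F : J -> tot) p q :
  (\sum_(j <- s | P j) F j) p q = \sum_(j <- s | P j) F j p q.
Proof. by rewrite !dprod_sumE. Qed.

Definition dtot (i : nat) (F : tot) : tot := fun p q =>
  md Y i (p + i%:Z) (q - 1 + i%:Z) p q (F (p + i%:Z) (q - 1 + i%:Z)).
Lemma dtot_is_linear i : linear (dtot i).
Proof. by move=> a F G; apply: tot_ext => p q; rewrite /dtot /= linearP. Qed.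
HB.instance Definition _ i := GRing.isLinear.Build R tot tot *:%R (dtot i) (dtot_is_linear i).

Lemma dtotE i (F : tot) p q p' q' : p + i%:Z = p' -> q - 1 + i%:Z = q' ->
  dtot i F p q = md Y i p' q' p q (F p' q').
Proof. by move=> <- <-. Qed.

Lemma dtot_rel (l : nat) (F : tot) : \sum_(i < l.+1) (-1) ^+ i *: dtot i (dtot (l - i) F) = 0.
Proof.
have md_md_congr i j a b c d e f a' b' c' d' :
    a = a' -> b = b' -> c = c' -> d = d' ->
    md Y i c d e f (md Y j a b c d (F a b)) = md Y i c' d' e f (md Y j a' b' c' d' (F a' b')).
  by move=> <- <- <- <-.
apply: tot_ext => p q; rewrite tot_sumE.
have := @md_rel _ _ Y l (p + l%:Z) (q - 2 + l%:Z) (F (p + l%:Z) (q - 2 + l%:Z)).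
have -> : p + l%:Z - l%:Z = p by lia.
have -> : q - 2 + l%:Z + 2 - l%:Z = q by lia.
move=> e; rewrite -[RHS]e; apply: eq_bigr => i _; have hi := ltn_ord i.
by rewrite !dprod_scaleE; congr (_ *: _); apply: md_md_congr; lia.
Qed.

Definition tot_delta (a b : int) (y : Y a b) : tot := fun p q =>
  if a =P p is ReflectT e1 then
    if b =P q is ReflectT e2 then eq_rect b (Y p) (eq_rect a (Y^~ b) y p e1) q e2 else 0
  else 0.

Lemma tot_deltaE a b (y : Y a b) : tot_delta y a b = y.
Proof.
rewrite /tot_delta; case: (a =P a) => [e1|//]; case: (b =P b) => [e2|//].
by rewrite (eq_irrelevance e1 (erefl a)) (eq_irrelevance e2 (erefl b)).
Qed.

Lemma tot_delta0 a b (y : Y a b) p q : (p != a) || (q != b) -> tot_delta y p q = 0.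
Proof.
rewrite /tot_delta; case: (a =P p) => [e1|//]; case: (b =P q) => [e2|//].
by subst; rewrite !eqxx.
Qed.

Lemma tot_delta_is_linear a b : linear (@tot_delta a b).
Proof.
move=> c y z; apply: tot_ext => p q; rewrite /= !dprod_addE !dprod_scaleE /tot_delta.
case: (a =P p) => [e1|_]; last by rewrite scaler0 addr0.
case: (b =P q) => [e2|_]; last by rewrite scaler0 addr0.
by subst.
Qed.
HB.instance Definition _ a b :=
  GRing.isLinear.Build R (Y a b) tot *:%R (@tot_delta a b) (@tot_delta_is_linear a b).

Lemma dtot_delta i a b (y : Y a b) :
  dtot i (tot_delta y) = tot_delta (md Y i a b (a - i%:Z) (b + 1 - i%:Z) y).
Proof.
apply: tot_ext => p q; rewrite /dtot.
case: (eqVneq (p + i%:Z) a) => [e1|n1]; first case: (eqVneq (q - 1 + i%:Z) b) => [e2|n2].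
- subst a b; rewrite tot_deltaE.
  have -> : p + i%:Z - i%:Z = p by lia.
  have -> : q - 1 + i%:Z + 1 - i%:Z = q by lia.
  by rewrite tot_deltaE.
- rewrite tot_delta0 ?n2 ?orbT // linear0 tot_delta0 //.
  by apply/orP; right; apply/eqP => e; move/eqP: n2; apply; lia.
- rewrite tot_delta0 ?n1 // linear0 tot_delta0 //.
  by apply/orP; left; apply/eqP => e; move/eqP: n1; apply; lia.
Qed.

Lemma tot_delta_md_congr i a b c d c' d' (y : Y a b) : c = c' -> d = d' ->
  tot_delta (md Y i a b c d y) = tot_delta (md Y i a b c' d' y).
Proof. by move=> <- <-. Qed.
End TotalModule.

Lemma signr_nn (R : pzRingType) (i : nat) : (-1) ^+ i * (-1) ^+ i = 1 :> R.
Proof. by rewrite -exprD -signr_odd oddD addbb. Qed.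

Lemma signr_subn (R : pzRingType) (L i : nat) :
  (i <= L)%N -> (-1) ^+ (L - i) = (-1) ^+ L * (-1) ^+ i :> R.
Proof. by move=> hiL; rewrite -{2}(subnK hiL) exprD -mulrA signr_nn mulr1. Qed.

Lemma signr_pred (R : pzRingType) (m : nat) : (0 < m)%N -> (-1) ^+ m.-1 = - (-1) ^+ m :> R.
Proof. by case: m => // m _; rewrite exprS mulN1r opprK. Qed.

Lemma sumr_ord_pick (V : nmodType) (L j : nat) (F : nat -> V) :
  \sum_(i < L.+1) (if (i : nat) == j then F i else 0) = if (j <= L)%N then F j else 0.
Proof. by rewrite -big_mkcond big_ord1_eq ltnS. Qed.

Lemma sumr_pred_telescope (V : zmodType) (H : nat -> V) N :
  \sum_(m < N.+1) (H m - H m.-1) = H N - H 0%N.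
Proof.
elim: N => [|N IH]; first by rewrite big_ord1.
by rewrite big_ord_recr /= IH addrC addrA subrK.
Qed.

Section ConeDifferential.
Variables (R : comPzRingType) (n : option nat) (Y : mcx R n) (r : nat).

Definition totseq := dprod (fun _ : nat => tot Y).
Definition cone_space := (totseq * totseq)%type.

(* Besides acting
   by [± dtot i] termwise, [d_0] sends [α_m] into [γ_m] when [cone_link0 m] and [d_1]
   sends [α_(m-1)] into [γ_m] when [cone_link1 m]: along this telescope of length [r]
   an element of [α_0] becomes an [(r+1)]-boundary. *)
Definition cone_link0 (m : nat) : bool := if r is 0 then m == 0%N else (0 < m < r)%N.
Definition cone_link1 (m : nat) : bool := (0 < m <= r)%N.

Definition cone_d_fst i (z : cone_space) : totseq := fun m => (-1) ^+ m *: dtot i (z.1 m).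
Definition cone_d_snd i (z : cone_space) : totseq := fun m =>
  - (-1) ^+ (m + i) *: dtot i (z.2 m)
  + (if (i == 0)%N && cone_link0 m then z.1 m else 0)
  + (if (i == 1)%N && cone_link1 m then z.1 m.-1 else 0).
Definition cone_d i (z : cone_space) : cone_space := (cone_d_fst i z, cone_d_snd i z).

Lemma cone_d_is_linear i : linear (cone_d i).
Proof.
have scaleDr3 (V : lmodType R) (a : R) (A1 A2 B1 B2 C1 C2 : V) :
    a *: (A1 + B1 + C1) + (A2 + B2 + C2) = (a *: A1 + A2) + (a *: B1 + B2) + (a *: C1 + C2).
  by rewrite !scalerDr addrACA; congr (_ + _); rewrite addrACA.
move=> a x y; apply: injective_projections; apply: functional_extensionality_dep => m /=.
- by rewrite /cone_d_fst /= !dprod_addE !dprod_scaleE linearP scalerDr !scalerA mulrC.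
- rewrite /cone_d_snd /= scaleDr3 !dprod_addE !dprod_scaleE linearP scalerDr !scalerA (mulrC a).
  by case: (_ && cone_link0 m); case: (_ && cone_link1 m); rewrite ?scaler0 ?addr0.
Qed.
HB.instance Definition _ i :=
  GRing.isLinear.Build R cone_space cone_space *:%R (cone_d i) (cone_d_is_linear i).

Lemma cone_d_sum_fst (w : nat -> cone_space) L m :
  (\sum_(i < L.+1) (-1) ^+ i *: cone_d i (w (L - i)%N)).1 m =
  (-1) ^+ m *: \sum_(i < L.+1) (-1) ^+ i *: dtot i ((w (L - i)%N).1 m).
Proof.
rewrite pair_sumE /= dprod_sumE scaler_sumr; apply: eq_bigr => i _.
by rewrite dprod_scaleE /cone_d_fst !scalerA mulrC.
Qed.

Lemma sumr_sign_if0 (V : lmodType R) L (c : bool) (F : nat -> V) :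
  \sum_(i < L.+1) (-1) ^+ i *: (if ((i : nat) == 0%N) && c then F i else 0) =
  if c then F 0%N else 0.
Proof.
rewrite (eq_bigr (fun i : 'I_L.+1 => if (i : nat) == 0%N then (if c then F 0%N else 0) else 0)).
  by rewrite (@sumr_ord_pick _ L 0 (fun=> if c then F 0%N else 0)) leq0n.
by move=> i _; case: eqP => [->|_] /=; rewrite ?expr0 ?scale1r ?scaler0.
Qed.

Lemma sumr_sign_if1 (V : lmodType R) L (c : bool) (F : nat -> V) :
  \sum_(i < L.+1) (-1) ^+ i *: (if ((i : nat) == 1%N) && c then F i else 0) =
  if (0 < L)%N && c then - F 1%N else 0.
Proof.
rewrite (eq_bigr (fun i : 'I_L.+1 => if (i : nat) == 1%N then (if c then - F 1%N else 0) else 0)).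
  by rewrite (@sumr_ord_pick _ L 1 (fun=> if c then - F 1%N else 0)); case: L => //= L; case: c.
move=> i _; case: eqP => [->|_] /=; last by rewrite scaler0.
by case: c; rewrite ?scaler0 // expr1 scaleN1r.
Qed.

Lemma cone_d_sum_snd (w : nat -> cone_space) L m :
  (\sum_(i < L.+1) (-1) ^+ i *: cone_d i (w (L - i)%N)).2 m =
  - ((-1) ^+ m *: \sum_(i < L.+1) dtot i ((w (L - i)%N).2 m))
  + (if cone_link0 m then (w L).1 m else 0)
  - (if (0 < L)%N && cone_link1 m then (w L.-1).1 m.-1 else 0).
Proof.
rewrite pair_sumE /= dprod_sumE.
rewrite (eq_bigr (fun i : 'I_L.+1 => - ((-1) ^+ m *: dtot i ((w (L - i)%N).2 m)) +
   (-1) ^+ i *: (if ((i : nat) == 0%N) && cone_link0 m then (w (L - i)%N).1 m else 0) +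
   (-1) ^+ i *: (if ((i : nat) == 1%N) && cone_link1 m then (w (L - i)%N).1 m.-1 else 0)));
  last first.
  move=> i _; rewrite dprod_scaleE /cone_d_snd !scalerDr scalerA; congr (_ + _ + _).
  by rewrite exprD mulrN mulrCA signr_nn mulr1 scaleNr.
rewrite !big_split /= sumrN -scaler_sumr (sumr_sign_if0 _ _ (fun i => (w (L - i)%N).1 m)).
rewrite (sumr_sign_if1 _ _ (fun i => (w (L - i)%N).1 m.-1)) subn0.
congr (_ + _ + _); case: L => [|L] /=; first by rewrite oppr0.
by rewrite subn1; case: (cone_link1 m); rewrite ?oppr0.
Qed.

Lemma cone_d_rel (l : nat) (z : cone_space) :
  \sum_(i < l.+1) (-1) ^+ i *: cone_d i (cone_d (l - i) z) = 0.
Proof.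
apply: injective_projections; apply: functional_extensionality_dep => m.
  rewrite (cone_d_sum_fst (fun j => cone_d j z)) /=.
  rewrite (eq_bigr (fun i : 'I_l.+1 => (-1) ^+ m *: ((-1) ^+ i *: dtot i (dtot (l - i) (z.1 m))))).
    by rewrite -scaler_sumr dtot_rel !scaler0.
  by move=> i _; rewrite /cone_d_fst linearZ /= !scalerA mulrC.
rewrite (cone_d_sum_snd (fun j => cone_d j z)) /=.
rewrite (eq_bigr (fun i : 'I_l.+1 =>
   (- (-1) ^+ (m + l)) *: ((-1) ^+ i *: dtot i (dtot (l - i) (z.2 m)))
   + (if (i : nat) == l then (if cone_link0 m then dtot i (z.1 m) else 0) else 0)
   + (if (i : nat) == l.-1 then
        (if (0 < l)%N && cone_link1 m then dtot i (z.1 m.-1) else 0) else 0)));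
  last first.
  move=> i _; have hi := ltn_ord i; rewrite /cone_d_snd /= !linearD linearZ /=.
  congr (_ + _ + _).
  - by rewrite scalerA !exprD signr_subn // mulNr mulrA.
  - case: (eqVneq (i : nat) l) => e.
      by rewrite e subnn /=; case: (cone_link0 m); rewrite ?linear0.
    by rewrite (_ : (l - i == 0)%N = false) ?linear0 //; lia.
  - case: (eqVneq (i : nat) l.-1) => e.
      have -> : (l - i == 1)%N = (0 < l)%N by lia.
      by rewrite e; case: (0 < l)%N; case: (cone_link1 m); rewrite ?linear0.
    by rewrite (_ : (l - i == 1)%N = false) ?andFb ?linear0 //; lia.
rewrite !big_split /= -scaler_sumr dtot_rel scaler0 add0r.
rewrite (@sumr_ord_pick _ l l (fun i => if cone_link0 m then dtot i (z.1 m) else 0)) leqnn.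
rewrite (@sumr_ord_pick _ l l.-1
  (fun i => if (0 < l)%N && cone_link1 m then dtot i (z.1 m.-1) else 0)) leq_pred.
rewrite /= /cone_d_fst.
case: (cone_link0 m); case: (boolP ((0 < l)%N && cone_link1 m)) => [/andP [hl /andP [hm _]]|_];
  rewrite ?addr0 ?add0r ?scalerDr ?opprD ?oppr0 ?subr0.
- by rewrite signr_pred // scaleNr opprK addrAC addrNK addNr.
- by rewrite addr0 addNr.
- by rewrite signr_pred // scaleNr opprK addNr.
- by rewrite scaler0 oppr0 addr0.
Qed.
End ConeDifferential.

Section Cone.
Variables (R : comPzRingType) (n : option nat) (Y : mcx R n) (r : nat).
Hypothesis n_ge2 : if n is Some m then (2 <= m)%N else true.

Definition cone_md i (p q p' q' : int) (z : cone_space Y) : cone_space Y :=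
  if (p' == p - i%:Z) && (q' == q + 1 - i%:Z) then cone_d r i z else 0.

Lemma cone_md_is_linear i p q p' q' : linear (cone_md i p q p' q').
Proof.
move=> a x y; rewrite /cone_md; case: (_ && _); first by rewrite linearP.
by rewrite scaler0 addr0.
Qed.
HB.instance Definition _ i p q p' q' := GRing.isLinear.Build R (cone_space Y) (cone_space Y)
  *:%R (cone_md i p q p' q') (cone_md_is_linear i p q p' q').

Lemma cone_mdE i p q p' q' (z : cone_space Y) : p' = p - i%:Z -> q' = q + 1 - i%:Z ->
  cone_md i p q p' q' z = cone_d r i z.
Proof. by move=> -> ->; rewrite /cone_md !eqxx. Qed.

Lemma cone_md_deg i p q p' q' (z : cone_space Y) :
  (p' != p - i%:Z) || (q' != q + 1 - i%:Z) -> cone_md i p q p' q' z = 0.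
Proof. by rewrite /cone_md; case/orP => /negbTE ->; rewrite ?andbF. Qed.

(* The links live in [d_0] and [d_1], which is where [2 <= n] is needed. *)
Lemma cone_d_vanish i (z : cone_space Y) : ~~ ltx i n -> cone_d r i z = 0.
Proof.
move=> hi.
have dtot0 (F : tot Y) : dtot i F = 0.
  by apply: tot_ext => p q; exact: md_vanish.
have i_gt1 : (1 < i)%N by move: n_ge2 hi; case: n => //= m; lia.
apply: injective_projections; apply: functional_extensionality_dep => m /=.
  by rewrite /cone_d_fst dtot0 scaler0.
rewrite /cone_d_snd dtot0 scaler0 add0r.
by rewrite (gtn_eqF i_gt1) (gtn_eqF (ltnW i_gt1)) addr0.
Qed.

Lemma cone_md_vanish i p q p' q' (z : cone_space Y) :
  ~~ ltx i n -> cone_md i p q p' q' z = 0.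
Proof. by move=> hi; rewrite /cone_md cone_d_vanish //; case: (_ && _). Qed.

Lemma cone_md_rel (l : nat) p q (z : cone_space Y) :
  \sum_(i < l.+1)
    (-1) ^+ i *: cone_md i (p - (l - i)%:Z) (q + 1 - (l - i)%:Z) (p - l%:Z) (q + 2 - l%:Z)
                   (cone_md (l - i) p q (p - (l - i)%:Z) (q + 1 - (l - i)%:Z) z) = 0.
Proof.
rewrite -[RHS](cone_d_rel r l z); apply: eq_bigr => i _; have hi := ltn_ord i.
by rewrite !cone_mdE //; lia.
Qed.

Definition cone : mcx R n :=
  @Mcx R n (fun _ _ => cone_space Y) cone_md cone_md_deg cone_md_vanish cone_md_rel.

Definition cone_eps_at (p q : int) (z : cone_space Y) : Y p q := z.1 0%N p q.
Lemma cone_eps_at_is_linear p q : linear (cone_eps_at p q).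
Proof. by []. Qed.
HB.instance Definition _ p q := GRing.isLinear.Build R (cone_space Y) (Y p q)
  *:%R (cone_eps_at p q) (cone_eps_at_is_linear p q).

Lemma cone_eps_comm i p q p' q' (z : cone p q) :
  cone_eps_at p' q' (md cone i p q p' q' z) = md Y i p q p' q' (cone_eps_at p q z).
Proof.
rewrite /= /cone_md; case: (boolP (_ && _)) => [/andP [/eqP e1 /eqP e2]|hc].
  by rewrite /cone_eps_at /= /cone_d_fst expr0 scale1r; apply: dtotE; lia.
by rewrite md_deg // -negb_and.
Qed.
Definition cone_eps : mhom cone Y := @Mhom R n cone Y cone_eps_at cone_eps_comm.
End Cone.

Section ConeBoundary.
Variables (R : comPzRingType) (n : option nat) (Y : mcx R n) (r : nat).
Variable a : nat -> cone_space Y.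
Hypothesis a_rel :
  forall L, (L <= r)%N -> \sum_(i < L.+1) (-1) ^+ i *: cone_d r i (a (L - i)%N) = 0.
Hypothesis r_gt0 : (0 < r)%N.

Definition dgamma L m : tot Y := \sum_(i < L.+1) dtot i ((a (L - i)%N).2 m).

Lemma dgamma_link L m : (L <= r)%N -> (0 < m <= r)%N ->
  (-1) ^+ m *: dgamma L m =
  (if (m < r)%N then (a L).1 m else 0) - (if (0 < L)%N then (a L.-1).1 m.-1 else 0).
Proof.
move=> hL hm.
have := f_equal (fun z : cone_space Y => z.2 m) (a_rel hL).
rewrite cone_d_sum_snd /= /dgamma.
have -> : cone_link0 r m = (m < r)%N by rewrite /cone_link0; case: r r_gt0 hm => //= r' _; lia.
have -> : cone_link1 r m by [].
by rewrite andbT => /eqP; rewrite -addrA addrC subr_eq0 => /eqP <-.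
Qed.

(* The tuple [b] of the definition of [Br] exhibiting [(a 0).1 0] as an [(r+1)]-boundary. *)
Definition gamma_tail t : tot Y :=
  \sum_(m < r.+1 | (t <= m)%N && (0 < m)%N) (-1) ^+ m *: (a (m - t)%N).2 m.
Definition boundary_wit s : tot Y := - (-1) ^+ (r - s) *: gamma_tail (r - s)%N.

Lemma boundary_wit_sum l : (l <= r)%N ->
  \sum_(i < l.+1) (-1) ^+ i *: dtot i (boundary_wit (l - i)%N) =
  - (-1) ^+ (r - l) *: \sum_(m < r.+1)
      (if (r - l <= m)%N && (0 < m)%N then (-1) ^+ m *: dgamma (m - (r - l)) m else 0).
Proof.
move=> hl; set T := (r - l)%N.
rewrite (eq_bigr (fun i : 'I_l.+1 => (- (-1) ^+ T) *: \sum_(m < r.+1)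
   (if (T + i <= m)%N && (0 < m)%N then (-1) ^+ m *: dtot i ((a (m - (T + i))%N).2 m)
    else 0))); last first.
  move=> i _; have hi := ltn_ord i; rewrite /boundary_wit.
  have -> : (r - (l - i) = T + i)%N by rewrite /T; lia.
  rewrite linearZ scalerA /gamma_tail linear_sum big_mkcond /=.
  have -> : (-1) ^+ i * - (-1) ^+ (T + i) = - (-1) ^+ T :> R.
    by rewrite exprD mulrN mulrCA signr_nn mulr1.
  by congr (_ *: _); apply: eq_bigr => m _; case: (_ && _); rewrite ?linearZ.
rewrite -scaler_sumr exchange_big /=; congr (_ *: _); apply: eq_bigr => m _.
have hm := ltn_ord m.
case: (boolP ((T <= m)%N && (0 < m)%N)) => [/andP [h1 h2] | hc]; last first.
  by apply: big1 => i _; case: (boolP (_ && _)) => // hc2; move: hc hc2; lia.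
have hK : ((m - T).+1 <= l.+1)%N by rewrite /T; lia.
rewrite /dgamma scaler_sumr.
rewrite (big_ord_widen l.+1 (fun i => (-1) ^+ m *: dtot i ((a (m - T - i)%N).2 m)) hK).
rewrite [RHS]big_mkcond; apply: eq_bigr => i _ /=.
have -> : (T + i <= m)%N && (0 < m)%N = (i < (m - T).+1)%N by lia.
by rewrite subnDA.
Qed.

Lemma boundary_wit_rel l : (l <= r)%N ->
  \sum_(i < l.+1) (-1) ^+ i *: dtot i (boundary_wit (l - i)%N) =
  if l == r then (a 0%N).1 0%N else 0.
Proof.
move=> hl; rewrite boundary_wit_sum //; set T := (r - l)%N.
pose H m := if (T <= m)%N && (m < r)%N then (a (m - T)%N).1 m else 0.
rewrite (eq_bigr (fun m : 'I_r.+1 => H m - H m.-1)); last first.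
  move=> m _; have hm := ltn_ord m; rewrite /H.
  case: (boolP ((T <= m)%N && (0 < m)%N)) => [/andP [h1 h2]|hc].
    rewrite dgamma_link; [|rewrite /T; lia|lia].
    rewrite h1 /=.
    have -> : (T <= m.-1)%N && (m.-1 < r)%N = (0 < m - T)%N by lia.
    by have -> : (m.-1 - T = (m - T).-1)%N by lia.
  case: (eqVneq (m : nat) 0%N) => [->|hm0]; first by rewrite subrr.
  have -> : (T <= m)%N && (m < r)%N = false by move: hc; lia.
  have -> : (T <= m.-1)%N && (m.-1 < r)%N = false by move: hc; lia.
  by rewrite subrr.
rewrite sumr_pred_telescope /H ltnn andbF sub0r.
case: (eqVneq l r) => [e|ne].
  have -> : T = 0%N by rewrite /T e subnn.
  by rewrite /= r_gt0 expr0 scaleNr scale1r opprK.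
have -> : (T <= 0)%N = false by rewrite /T; lia.
by rewrite /= oppr0 scaler0.
Qed.
End ConeBoundary.

Lemma shE (p : int) (j : nat) : sh p j = p - j%:Z.
Proof. by case: j => //=; rewrite subr0. Qed.

Section ConeCycles.
Variables (R : comPzRingType) (n : option nat) (Y : mcx R n) (r : nat).
Hypothesis n_ge2 : if n is Some m then (2 <= m)%N else true.

Lemma cone_alpha0_Br (a : nat -> cone_space Y) p q :
  (forall L, (L <= r)%N -> \sum_(i < L.+1) (-1) ^+ i *: cone_d r i (a (L - i)%N) = 0) ->
  Br r.+1 ((a 0%N).1 0%N p q).
Proof.
case: r => [|r'] a_rel.
  have := f_equal (fun w : cone_space Y => w.2 0%N) (a_rel 0%N (leqnn 0)).
  rewrite cone_d_sum_snd /= big_ord1 expr0 scale1r subr0 => /eqP.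
  rewrite addrC subr_eq0 => /eqP ->.
  by exists ((a 0%N).2 0%N p (q - 1)); apply: dtotE => /=; lia.
exists (fun s => boundary_wit r'.+1 a s (sh (p + r'.+2%:Z - 1) s) (sh (q + r'.+2%:Z - 2) s)); split.
  have := boundary_wit_rel a_rel (ltn0Sn r') (leqnn r'.+1); rewrite eqxx => <-.
  rewrite tot_sumE; apply: eq_bigr => i _; have hi := ltn_ord i; rewrite !dprod_scaleE.
  have -> : (r'.+2 - 1 - i = r'.+1 - i)%N by lia.
  by congr (_ *: _); apply: dtotE; rewrite !shE; lia.
move=> l hl; have hl' : (l <= r'.+1)%N by lia.
have := boundary_wit_rel a_rel (ltn0Sn r') hl'.
have -> : (l == r'.+1) = false by lia.
move=> e.
rewrite -[RHS](congr1 (fun F : tot Y =>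
  F (sh (p + r'.+2%:Z - 1) l) (sh (q + r'.+2%:Z - 2) l + 1)) e).
rewrite tot_sumE; apply: eq_bigr => i _; have hi := ltn_ord i; rewrite !dprod_scaleE.
by congr (_ *: _); symmetry; apply: dtotE; rewrite !shE; lia.
Qed.

Lemma cone_eps_Br p q (z : cone Y r n_ge2 p q) :
  Zr r.+1 z -> Br r.+1 (cone_eps Y r n_ge2 p q z).
Proof.
case=> a [<- a_rel]; apply: cone_alpha0_Br => L hL.
rewrite -[RHS](a_rel L hL); apply: eq_bigr => i _; have hi := ltn_ord i.
by rewrite /= cone_mdE //; rewrite !shE; lia.
Qed.
End ConeCycles.

Section ConeLifts.
Variables (R : comPzRingType) (n : option nat) (Y : mcx R n) (r k : nat).
Variables (p q : int) (b : forall j : nat, Y (sh p j) (sh q j)).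
Hypothesis b_rel : zw_rel k b.
Hypothesis k_le_r : (k <= r)%N.

Lemma dtot_delta_zw_rel K : (K < k)%N ->
  \sum_(i < K.+1) (-1) ^+ i *: dtot i (tot_delta (b (K - i)%N)) = 0.
Proof.
move=> hK; have := congr1 (@tot_delta _ _ Y (sh p K) (sh q K + 1)) (b_rel hK).
rewrite linear0 linear_sum => e; rewrite -[RHS]e.
apply: eq_bigr => i _; have hi := ltn_ord i; rewrite dtot_delta linearZ.
by congr (_ *: _); apply: tot_delta_md_congr; rewrite !shE; lia.
Qed.

(* The relations of the lift are, on [α_m], those of [b] at level [l - m]; on [γ_m] the
   two link terms cancel. *)
Definition cone_lift j : cone_space Y :=
  (fun m => if (m <= j)%N then tot_delta (b (j - m)%N) else 0, 0).

Lemma cone_lift_rel_fst l m : (l < k)%N ->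
  (\sum_(i < l.+1) (-1) ^+ i *: cone_d r i (cone_lift (l - i)%N)).1 m = 0.
Proof.
move=> hl; rewrite cone_d_sum_fst.
case: (leqP m l) => hml; last first.
  rewrite big1 ?scaler0 // => i _.
  by rewrite /cone_lift /= (_ : (m <= l - i)%N = false) ?linear0 ?scaler0 //; lia.
set K := (l - m)%N; have hK : (K.+1 <= l.+1)%N by lia.
rewrite (eq_bigr (fun i : 'I_l.+1 =>
    if (i < K.+1)%N then (-1) ^+ i *: dtot i (tot_delta (b (K - i)%N)) else 0)); last first.
  move=> i _; have hi := ltn_ord i; rewrite /cone_lift /=.
  have -> : (m <= l - i)%N = (i < K.+1)%N by rewrite /K; lia.
  case: ifP => hi'; last by rewrite linear0 scaler0.
  by have -> : (l - i - m = K - i)%N by rewrite /K; lia.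
rewrite -big_mkcond.
rewrite -(big_ord_widen l.+1 (fun i => (-1) ^+ i *: dtot i (tot_delta (b (K - i)%N))) hK).
by rewrite dtot_delta_zw_rel ?scaler0 //; rewrite /K; lia.
Qed.

Lemma cone_lift_rel_snd l m : (l < k)%N ->
  (\sum_(i < l.+1) (-1) ^+ i *: cone_d r i (cone_lift (l - i)%N)).2 m = 0.
Proof.
move=> hl; have r_gt0 : (0 < r)%N by lia.
rewrite cone_d_sum_snd big1 => [|i _]; last exact: linear0.
rewrite scaler0 oppr0 add0r.
case: (posnP m) => [->|m_gt0].
  have -> : cone_link0 r 0 = false by rewrite /cone_link0; case: (r) r_gt0.
  by rewrite /cone_link1 /= andbF subr0.
have -> : cone_link0 r m = (m < r)%N by rewrite /cone_link0; case: (r) r_gt0 m_gt0 => //= r' _; lia.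
have -> : cone_link1 r m = (m <= r)%N by rewrite /cone_link1; lia.
rewrite /cone_lift /=.
case: (leqP m l) => hml.
  have -> : (m < r)%N by lia.
  have -> : (0 < l)%N by lia.
  have -> : (m <= r)%N by lia.
  have -> : (m.-1 <= l.-1)%N by lia.
  have -> : (l.-1 - m.-1 = l - m)%N by lia.
  by rewrite subrr.
case: (posnP l) => [->|l_gt0] /=; first by case: (m < r)%N; rewrite subrr.
have -> : (m.-1 <= l.-1)%N = false by lia.
by case: (m < r)%N; case: (m <= r)%N; rewrite /= subrr.
Qed.
End ConeLifts.

Lemma J_inj_copair_cone (R : comPzRingType) (n : option nat) (X Y : mcx R n) (f : mhom X Y)
    (r k : nat) (n_ge2 : if n is Some m then (2 <= m)%N else true) :
  (k <= r)%N -> J_inj k (msum_copair f (cone_eps Y r n_ge2)).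
Proof.
move=> k_le_r p q b b_rel.
exists (fun j => (0, cone_lift b j)); split=> [l hl|j _]; last first.
  by rewrite /= /copair linear0 add0r /cone_eps_at /= subn0 tot_deltaE.
rewrite pair_sumE; apply: injective_projections => /=.
  by apply: big1 => i _; rewrite linear0 scaler0.
rewrite (eq_bigr (fun i : 'I_l.+1 => (-1) ^+ i *: cone_d r i (cone_lift b (l - i)%N))); last first.
  by move=> i _; have hi := ltn_ord i; rewrite /= cone_mdE //; rewrite !shE; lia.
apply: injective_projections; apply: functional_extensionality_dep => m.
  by rewrite (cone_lift_rel_fst (r := r) b_rel).
by rewrite (cone_lift_rel_snd b k_le_r).
Qed.

Theorem mainTheorem8 (R : comPzRingType) (n : option nat) (r k : nat) :
  (if n is Some m then (2 <= m)%N else true) -> (k <= r)%N ->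
  forall (X Y : mcx R n) (g : mhom X Y), J_cof k g -> Er_qiso r g.
Proof.
move=> n_ge2 k_le_r X Y g g_cof.
have [h [hg hgh]] := g_cof _ _ _ (J_inj_copair_cone g n_ge2 k_le_r)
  (msum_inl X (cone Y r n_ge2)) (mid Y) (fun p q x => addr0 (g p q x)).
exact: Er_qiso_of_retract (@cone_eps_Br _ _ Y r n_ge2) hg hgh.
Qed.
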